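(* Let $A$ and $B$ be braided Hopf algebras with braidings $\langle\cdot\mid\cdot\rangle_A$ and $\langle\cdot\mid\cdot\rangle_B$, and let $\chi:A\to B$ be a surjective Hopf algebra map which is braided, i.e. $\langle a\mid a'\rangle_A=\langle\chi(a)\mid\chi(a')\rangle_B$ for all $a,a'\in A$. Then the map $\chi^*:U(B)\to U(A)$, $u\mapsto u\circ\chi$, is an isomorphism of Hopf algebras.
   Context: A braiding on a bialgebra $A$ is a bilinear form $\langle\cdot\mid\cdot\rangle$ on $A$ satisfying, for all $a,b,c$ (Sweedler notation): $\sum\langle a_{(1)}\mid b_{(1)}\rangle b_{(2)}a_{(2)}=\sum\langle a_{(2)}\mid b_{(2)}\rangle a_{(1)}b_{(1)}$; convolution-invertibility in $(A\otimes A)^*$; $\langle a\mid bc\rangle=\sum\langle a_{(1)}\mid b\rangle\langle a_{(2)}\mid c\rangle$; $\langle ab\mid c\rangle=\sum\langle b\mid c_{(1)}\rangle\langle a\mid c_{(2)}\rangle$. For a braided Hopf algebra $A$ with antipode $S$ and restricted dual $A^\circ$, define $l^+(a)(b)=\langle a\mid b\rangle$, $l^-(a)(b)=\langle b\mid S(a)\rangle$; $U(A)$ is the Hopf subalgebra of $A^\circ$ generated by $l^+(A)\cup l^-(A)$. *)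

(* Hopf algebras over a field K, Sweedler notation encoded
   by finite lists of pairs; tensor identities are tested against all
   multilinear K-valued forms (which separate points of tensor products
   of vector spaces over a field). *)
From HB Require Import structures.
From mathcomp Require Import all_boot all_order all_algebra.
Set Implicit Arguments. Unset Strict Implicit. Unset Printing Implicit Defensive.
Import GRing.Theory.
Local Open Scope ring_scope.

Section HopfDefs.
Variable K : fieldType.

Definition lin (U V : lmodType K) (f : U -> V) :=
  forall (k : K) (x y : U), f (k *: x + y) = k *: f x + f y.

Variable A : algType K.

Definition klin (f : A -> K) := forall (k : K) (x y : A), f (k *: x + y) = k * f x + f y.

Definition bilin (phi : A -> A -> K) :=
  (forall b, klin (fun a => phi a b)) /\ (forall a, klin (phi a)).

Definition trilin (t : A -> A -> A -> K) :=
  (forall b c, klin (fun a => t a b c)) /\ (forall a c, klin (fun b => t a b c))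
  /\ (forall a b, klin (t a b)).

Record HopfData := { cop : A -> seq (A * A); cou : A -> K; ant : A -> A }.

Definition is_hopf (H : HopfData) : Prop :=
  (forall phi, bilin phi -> klin (fun a => \sum_(p <- cop H a) phi p.1 p.2)) /\
  (forall t, trilin t -> forall a,
     \sum_(p <- cop H a) \sum_(q <- cop H p.1) t q.1 q.2 p.2
     = \sum_(p <- cop H a) \sum_(q <- cop H p.2) t p.1 q.1 q.2) /\
  klin (cou H) /\
  (forall a, \sum_(p <- cop H a) cou H p.1 *: p.2 = a) /\
  (forall a, \sum_(p <- cop H a) cou H p.2 *: p.1 = a) /\
  (forall phi, bilin phi -> forall a b,
     \sum_(p <- cop H (a * b)) phi p.1 p.2
     = \sum_(p <- cop H a) \sum_(q <- cop H b) phi (p.1 * q.1) (p.2 * q.2)) /\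
  (forall phi, bilin phi -> \sum_(p <- cop H 1) phi p.1 p.2 = phi 1 1) /\
  (forall a b, cou H (a * b) = cou H a * cou H b) /\
  cou H 1 = 1 /\
  lin (ant H) /\
  (forall a, \sum_(p <- cop H a) ant H p.1 * p.2 = cou H a *: 1) /\
  (forall a, \sum_(p <- cop H a) p.1 * ant H p.2 = cou H a *: 1).

Definition is_braiding (H : HopfData) (br : A -> A -> K) : Prop :=
  bilin br /\
  (forall a b, \sum_(p <- cop H a) \sum_(q <- cop H b) br p.1 q.1 *: (q.2 * p.2)
             = \sum_(p <- cop H a) \sum_(q <- cop H b) br p.2 q.2 *: (p.1 * q.1)) /\
  (exists br' : A -> A -> K, bilin br' /\
     (forall a b, \sum_(p <- cop H a) \sum_(q <- cop H b) br p.1 q.1 * br' p.2 q.2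
                  = cou H a * cou H b) /\
     (forall a b, \sum_(p <- cop H a) \sum_(q <- cop H b) br' p.1 q.1 * br p.2 q.2
                  = cou H a * cou H b)) /\
  (forall a b c, br a (b * c) = \sum_(p <- cop H a) br p.1 b * br p.2 c) /\
  (forall a b c, br (a * b) c = \sum_(p <- cop H c) br b p.1 * br a p.2).

Definition conv (H : HopfData) (f g : A -> K) : A -> K :=
  fun a => \sum_(p <- cop H a) f p.1 * g p.2.

(* "Delta f lies in X (x) X": f(ab) = sum_i g_i(a) h_i(b) with g_i, h_i in X *)
Definition cop_in (X : (A -> K) -> Prop) (f : A -> K) : Prop :=
  exists s : seq ((A -> K) * (A -> K)),
    (forall i, (i < size s)%N ->
       X (nth (fun _ => 0, fun _ => 0) s i).1 /\ X (nth (fun _ => 0, fun _ => 0) s i).2) /\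
    (forall a b, f (a * b) = \sum_(p <- s) p.1 a * p.2 b).

(* Hopf subalgebras of the restricted dual A^o.  Elements are linear
   functionals; the coproduct condition (Delta X <= X (x) X) forces
   them to lie in A^o. *)
Definition hopf_subalg (H : HopfData) (X : (A -> K) -> Prop) : Prop :=
  (forall f, X f -> klin f) /\
  X (cou H) /\
  (forall (k : K) f g, X f -> X g -> X (fun a => k * f a + g a)) /\
  (forall f g, X f -> X g -> X (conv H f g)) /\
  (forall f, X f -> X (fun a => f (ant H a))) /\
  (forall f, X f -> cop_in X f).

Definition lplus (br : A -> A -> K) (a : A) : A -> K := fun b => br a b.
Definition lminus (H : HopfData) (br : A -> A -> K) (a : A) : A -> K :=
  fun b => br b (ant H a).

Definition Ualg (H : HopfData) (br : A -> A -> K) (f : A -> K) : Prop :=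
  forall X, hopf_subalg H X -> (forall a, X (lplus br a)) ->
            (forall a, X (lminus H br a)) -> X f.

End HopfDefs.

Definition hopf_map (K : fieldType) (A B : algType K)
  (HA : HopfData A) (HB : HopfData B) (chi : A -> B) : Prop :=
  lin chi /\ chi 1 = 1 /\ (forall a b, chi (a * b) = chi a * chi b) /\
  (forall a, cou HB (chi a) = cou HA a) /\
  (forall phi, bilin phi -> forall a,
     \sum_(p <- cop HB (chi a)) phi p.1 p.2
     = \sum_(p <- cop HA a) phi (chi p.1) (chi p.2)).

From HB Require Import structures.
From mathcomp Require Import all_boot all_order all_algebra.
From Stdlib Require Import FunctionalExtensionality.
From Stdlib Require List.
Set Implicit Arguments. Unset Strict Implicit. Unset Printing Implicit Defensive.
Import GRing.Theory.
Local Open Scope ring_scope.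

(* U(B) and U(A) are the closures of l^+, l^- and the counit under linear
   combinations, convolution and precomposition with the antipode; each of these
   operations has an explicit coproduct, so the closure is a Hopf subalgebra of
   the restricted dual.  For l^- and for the antipode this uses that S is an
   anti-homomorphism of algebras and of coalgebras, and the transport along chi
   uses S_B o chi = chi o S_A: all three are uniqueness of a convolution inverse.
   Since chi is braided, u |-> u o chi sends l^+(chi a), l^-(chi a) to l^+(a),
   l^-(a) and commutes with the closure operations, so it maps U(B) onto U(A);
   it is injective because chi is onto, and it is a Hopf map because chi is. *)

Section Linearity.
Variable K : fieldType.

Section LinearMaps.
Variables U V W : lmodType K.
Implicit Types (g : U -> V) (x y : U).

Lemma lin0 g : lin g -> g 0 = 0.
Proof.
move=> hg; have := hg 1 0 0; rewrite scaler0 addr0 scale1r.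
by move/(congr1 (fun v => v - g 0)); rewrite addrK subrr.
Qed.

Lemma linD g x y : lin g -> g (x + y) = g x + g y.
Proof. by move=> hg; rewrite -[x]scale1r hg !scale1r. Qed.

Lemma linZ g k x : lin g -> g (k *: x) = k *: g x.
Proof. by move=> hg; rewrite -[k *: x]addr0 hg lin0 // addr0. Qed.

Lemma lin_sum g I (s : seq I) (F : I -> U) :
  lin g -> g (\sum_(i <- s) F i) = \sum_(i <- s) g (F i).
Proof.
move=> hg; elim: s => [|i s IHs]; first by rewrite !big_nil lin0.
by rewrite !big_cons linD // IHs.
Qed.

Lemma lin_id : lin (fun x : U => x).
Proof. by []. Qed.

Lemma lin_comp (f : V -> W) g : lin f -> lin g -> lin (fun x => f (g x)).
Proof. by move=> hf hg k x y; rewrite hg hf. Qed.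

End LinearMaps.

Lemma lin_mull (U : lmodType K) (A : algType K) (c : A) (g : U -> A) :
  lin g -> lin (fun x => c * g x).
Proof. by move=> hg k x y; rewrite hg mulrDr scalerAr. Qed.

Lemma lin_mulr (U : lmodType K) (A : algType K) (c : A) (g : U -> A) :
  lin g -> lin (fun x => g x * c).
Proof. by move=> hg k x y; rewrite hg mulrDl scalerAl. Qed.

Section Functionals.
Variable A : algType K.
Implicit Types (f g : A -> K) (x y : A).

Lemma klin_lin f : klin f -> lin (f : A -> K^o).
Proof. by []. Qed.

Lemma klinZ f k x : klin f -> f (k *: x) = k * f x.
Proof. by move/klin_lin/linZ. Qed.

Lemma klin_sum f I (s : seq I) (F : I -> A) :
  klin f -> f (\sum_(i <- s) F i) = \sum_(i <- s) f (F i).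
Proof. by move/klin_lin/lin_sum. Qed.

Lemma klin_sum_fun I (s : seq I) (F : I -> A -> K) :
  (forall i, klin (F i)) -> klin (fun x => \sum_(i <- s) F i x).
Proof.
move=> hF k x y; rewrite mulr_sumr -big_split.
by apply: eq_bigr => i _; rewrite hF.
Qed.

Lemma klin_mull (c : K) g : klin g -> klin (fun x => c * g x).
Proof. by move=> hg k x y; rewrite hg mulrDr mulrCA. Qed.

Lemma klin_mulr (c : K) g : klin g -> klin (fun x => g x * c).
Proof. by move=> hg k x y; rewrite hg mulrDl mulrA. Qed.

Lemma klin_lincomb (c : K) f g : klin f -> klin g -> klin (fun x => c * f x + g x).
Proof.
move=> hf hg k x y; rewrite hf hg mulrDr addrACA mulrDr mulrA.
by rewrite [c * k]mulrC mulrA.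
Qed.

Lemma klin_eq f g : f =1 g -> klin f -> klin g.
Proof. by move=> efg hf k x y; rewrite -!efg. Qed.

Lemma bilin_l (phi : A -> A -> K) b : bilin phi -> klin (fun a => phi a b).
Proof. by case. Qed.

Lemma bilin_r (phi : A -> A -> K) a : bilin phi -> klin (phi a).
Proof. by case. Qed.

Lemma bilin_mul f g : klin f -> klin g -> bilin (fun x y => f x * g y).
Proof. by move=> hf hg; split=> [y|x]; [apply: klin_mulr | apply: klin_mull]. Qed.

End Functionals.

Lemma klin_comp (A B : algType K) (f : B -> K) (g : A -> B) :
  klin f -> lin g -> klin (fun x => f (g x)).
Proof. by move=> hf hg k x y; rewrite hg hf. Qed.

End Linearity.

Ltac linearity :=
  repeat match goal with
  | |- klin (fun x => ?c * @?g x) => apply: (@klin_mull _ _ c g)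
  | |- klin (fun x => @?g x * ?c) => apply: (@klin_mulr _ _ c g)
  | H : bilin ?phi |- klin (fun x => ?phi (@?g x) ?b) =>
      apply: (@klin_comp _ _ _ (fun a => phi a b) g (@bilin_l _ _ phi b H))
  | H : bilin ?phi |- klin (fun x => ?phi ?a (@?g x)) =>
      apply: (@klin_comp _ _ _ (phi a) g (@bilin_r _ _ phi a H))
  | H : bilin ?phi |- klin (?phi ?a) => exact: (@bilin_r _ _ phi a H)
  | |- klin (fun x => ?f (@?g x)) => apply: (@klin_comp _ _ _ f g)
  | |- lin (fun x => x) => exact: lin_id
  | |- lin (fun x => ?c * @?g x) => apply: (@lin_mull _ _ _ c g)
  | |- lin (fun x => @?g x * ?c) => apply: (@lin_mulr _ _ _ c g)
  | |- lin (fun x => ?f (@?g x)) => apply: (@lin_comp _ _ _ _ f g)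
  | |- _ => assumption
  end.

(* A coalgebra [C] in Sweedler form whose axioms hold when tested against the
   functionals [linf], and an algebra [D] observed only through the functionals
   [test]: below, [C] and [D] are [A], [B] or [A ⊗ A]. *)
Definition coassociative (K : fieldType) (C : Type)
    (cop : C -> seq (C * C)) (linf : (C -> K) -> Prop) :=
  forall t : C -> C -> C -> K,
    (forall y z, linf (fun x => t x y z)) -> (forall x z, linf (fun y => t x y z)) ->
    (forall x y, linf (t x y)) -> forall a,
    \sum_(p <- cop a) \sum_(q <- cop p.1) t q.1 q.2 p.2
    = \sum_(p <- cop a) \sum_(q <- cop p.2) t p.1 q.1 q.2.

Definition counital (K : fieldType) (C : Type)
    (cop : C -> seq (C * C)) (cou : C -> K) (linf : (C -> K) -> Prop) :=
  forall phi, linf phi -> forall a,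
    \sum_(p <- cop a) cou p.1 * phi p.2 = phi a /\
    \sum_(p <- cop a) cou p.2 * phi p.1 = phi a.

Section ConvolutionInverse.
Variables (K : fieldType) (C D : Type).
Variables (cop : C -> seq (C * C)) (cou : C -> K) (linf : (C -> K) -> Prop).
Hypotheses (cop_coassoc : coassociative cop linf) (cop_counit : counital cop cou linf).
Variables (mul : D -> D -> D) (one : D) (test : (D -> K) -> Prop).
Hypothesis test_mulA : forall l x y z, test l -> l (mul x (mul y z)) = l (mul (mul x y) z).
Hypothesis test_mul1 : forall l x, test l -> l (mul x one) = l x.
Hypothesis test_1mul : forall l x, test l -> l (mul one x) = l x.
Hypothesis test_mull : forall c l, test l -> test (fun x => l (mul c x)).
Hypothesis test_mulr : forall c l, test l -> test (fun x => l (mul x c)).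
Variables f g h : C -> D.
Hypotheses (linf_f : forall l, test l -> linf (fun a => l (f a)))
           (linf_g : forall l, test l -> linf (fun a => l (g a)))
           (linf_h : forall l, test l -> linf (fun a => l (h a))).
Hypothesis conv_gf :
  forall l a, test l -> \sum_(p <- cop a) l (mul (g p.1) (f p.2)) = cou a * l one.
Hypothesis conv_fh :
  forall l a, test l -> \sum_(p <- cop a) l (mul (f p.1) (h p.2)) = cou a * l one.

(* g = g * (f * h) = (g * f) * h = h, tested against [l] *)
Lemma conv_inverse_unique l a : test l -> l (g a) = l (h a).
Proof.
move=> tl; have [_ <-] := cop_counit (linf_g tl) a.
transitivity (\sum_(p <- cop a) \sum_(q <- cop p.2)
    l (mul (g p.1) (mul (f q.1) (h q.2)))).
  apply: eq_bigr => p _.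
  by have /= -> := conv_fh p.2 (test_mull (g p.1) tl); rewrite test_mul1.
rewrite -(@cop_coassoc (fun x y z => l (mul (g x) (mul (f y) (h z))))); first last.
- by move=> x y; exact: linf_h (test_mull _ (test_mull _ tl)).
- by move=> x z; exact: linf_f (test_mulr _ (test_mull _ tl)).
- by move=> y z; exact: linf_g (test_mulr _ tl).
have [<- _] := cop_counit (linf_h tl) a.
apply: eq_bigr => p _; under eq_bigr => q _ do rewrite test_mulA //.
by have /= -> := conv_gf p.1 (test_mulr (h p.2) tl); rewrite test_1mul.
Qed.

End ConvolutionInverse.

Lemma alg_conv_inverse_unique (K : fieldType) (C : Type) (cop : C -> seq (C * C))
    (cou : C -> K) (linf : (C -> K) -> Prop) (D : algType K) (f g h : C -> D) :
  coassociative cop linf -> counital cop cou linf ->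
  (forall l, klin l -> linf (fun a => l (f a))) ->
  (forall l, klin l -> linf (fun a => l (g a))) ->
  (forall l, klin l -> linf (fun a => l (h a))) ->
  (forall l a, klin l -> \sum_(p <- cop a) l (g p.1 * f p.2) = cou a * l 1) ->
  (forall l a, klin l -> \sum_(p <- cop a) l (f p.1 * h p.2) = cou a * l 1) ->
  forall l a, klin l -> l (g a) = l (h a).
Proof.
move=> coA coU lf lg lh gf fh l a hl.
apply: (@conv_inverse_unique K C D cop cou linf coA coU *%R 1 (@klin K D)
  _ _ _ _ _ f g h lf lg lh gf fh l a hl).
- by move=> l' x y z _; rewrite mulrA.
- by move=> l' x _; rewrite mulr1.
- by move=> l' x _; rewrite mul1r.
- by move=> c l' hl'; linearity.
- by move=> c l' hl'; linearity.
Qed.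

Section HopfAlgebra.
Variables (K : fieldType) (A : algType K) (H : HopfData A).
Hypothesis hH : is_hopf H.
Local Notation S := (ant H).
Local Notation e := (cou H).

Lemma cop_klin phi : bilin phi -> klin (fun a => \sum_(p <- cop H a) phi p.1 p.2).
Proof. by case: hH => h _; apply: h. Qed.

Lemma hopf_coassoc : coassociative (cop H) (@klin K A).
Proof. by case: hH => _ [h _] t t1 t2 t3; apply: h. Qed.

Lemma hopf_counit : counital (cop H) e (@klin K A).
Proof.
case: hH => _ [_ [_ [hl [hr _]]]] g hg a.
by split; [rewrite -{2}(hl a) | rewrite -{2}(hr a)]; rewrite klin_sum //;
  apply: eq_bigr => p _; rewrite klinZ.
Qed.

Lemma cou_klin : klin e.
Proof. by case: hH => _ [_ [h _]]. Qed.

Lemma copM phi a b : bilin phi ->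
  \sum_(p <- cop H (a * b)) phi p.1 p.2
  = \sum_(p <- cop H a) \sum_(q <- cop H b) phi (p.1 * q.1) (p.2 * q.2).
Proof. by case: hH => _ [_ [_ [_ [_ [h _]]]]] hphi; apply: h. Qed.

Lemma cop1 phi : bilin phi -> \sum_(p <- cop H 1) phi p.1 p.2 = phi 1 1.
Proof. by case: hH => _ [_ [_ [_ [_ [_ [h _]]]]]]; apply: h. Qed.

Lemma couM a b : e (a * b) = e a * e b.
Proof. by case: hH => _ [_ [_ [_ [_ [_ [_ [h _]]]]]]]. Qed.

Lemma ant_lin : lin S.
Proof. by case: hH => _ [_ [_ [_ [_ [_ [_ [_ [_ [h _]]]]]]]]]. Qed.

Lemma cou_cop_l g a : klin g -> \sum_(p <- cop H a) e p.1 * g p.2 = g a.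
Proof. by move=> hg; case: (hopf_counit hg a). Qed.

Lemma cou_cop_r g a : klin g -> \sum_(p <- cop H a) e p.2 * g p.1 = g a.
Proof. by move=> hg; case: (hopf_counit hg a). Qed.

Lemma klin_antipode_l l a : klin l -> \sum_(p <- cop H a) l (S p.1 * p.2) = e a * l 1.
Proof.
case: hH => _ [_ [_ [_ [_ [_ [_ [_ [_ [_ [h _]]]]]]]]]] hl.
by rewrite -klin_sum // h klinZ.
Qed.

Lemma klin_antipode_r l a : klin l -> \sum_(p <- cop H a) l (p.1 * S p.2) = e a * l 1.
Proof.
case: hH => _ [_ [_ [_ [_ [_ [_ [_ [_ [_ [_ h]]]]]]]]]] hl.
by rewrite -klin_sum // h klinZ.
Qed.

(* The coalgebra [A ⊗ A]: a pair is a simple tensor, functionals are bilinear. *)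
Definition pair_cop (x : A * A) : seq ((A * A) * (A * A)) :=
  [seq ((p.1, q.1), (p.2, q.2)) | p <- cop H x.1, q <- cop H x.2].

Definition pair_cou (x : A * A) : K := e x.1 * e x.2.

Definition pair_klin (phi : A * A -> K) : Prop := bilin (fun a b => phi (a, b)).

Lemma sum_pair_cop (F : (A * A) * (A * A) -> K) x :
  \sum_(P <- pair_cop x) F P
  = \sum_(p <- cop H x.1) \sum_(q <- cop H x.2) F ((p.1, q.1), (p.2, q.2)).
Proof. exact: big_allpairs_dep. Qed.

Lemma pair_coassoc : coassociative pair_cop pair_klin.
Proof.
move=> t t1 t2 t3 [a b] /=; rewrite !sum_pair_cop /=.
under eq_bigr => p _ do under eq_bigr => q _ do rewrite sum_pair_cop /=.
under [RHS]eq_bigr => p _ do under eq_bigr => q _ do rewrite sum_pair_cop /=.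
transitivity (\sum_(p <- cop H a) \sum_(p' <- cop H p.1) \sum_(q <- cop H b)
   \sum_(q' <- cop H q.1) t (p'.1, q'.1) (p'.2, q'.2) (p.2, q.2)).
  by apply: eq_bigr => p _; rewrite exchange_big.
rewrite (@hopf_coassoc (fun x y z => \sum_(q <- cop H b) \sum_(q' <- cop H q.1)
   t (x, q'.1) (y, q'.2) (z, q.2))); first last.
- move=> x y; do 2!apply: klin_sum_fun => ?; exact: bilin_l (t3 _ _).
- move=> x z; do 2!apply: klin_sum_fun => ?; exact: bilin_l (t2 _ _).
- move=> y z; do 2!apply: klin_sum_fun => ?; exact: bilin_l (t1 _ _).
apply: eq_bigr => p _; rewrite [RHS]exchange_big; apply: eq_bigr => p' _.
apply: (@hopf_coassoc (fun x y z => t (p.1, x) (p'.1, y) (p'.2, z))).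
- by move=> y z; exact: bilin_r (t1 _ _).
- by move=> x z; exact: bilin_r (t2 _ _).
- by move=> x y; exact: bilin_r (t3 _ _).
Qed.

Lemma pair_counit : counital pair_cop pair_cou pair_klin.
Proof.
move=> phi [hphil hphir] [a b]; rewrite !sum_pair_cop /pair_cou /=; split.
- transitivity (\sum_(p <- cop H a) e p.1 * phi (p.2, b)); last exact: cou_cop_l (hphil b).
  apply: eq_bigr => p _; rewrite -(cou_cop_l b (hphir p.2)) mulr_sumr.
  by apply: eq_bigr => q _; rewrite mulrA.
- transitivity (\sum_(p <- cop H a) e p.2 * phi (p.1, b)); last exact: cou_cop_r (hphil b).
  apply: eq_bigr => p _; rewrite -(cou_cop_r b (hphir p.1)) mulr_sumr.
  by apply: eq_bigr => q _; rewrite mulrA.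
Qed.

End HopfAlgebra.

(* Elements of [A ⊗ A] are lists of simple tensors [r.1 ⊗ r.2], observed only
   through bilinear forms. *)
Section TensorSquare.
Variables (K : fieldType) (A : algType K).
Implicit Types (phi : A -> A -> K) (u v w : seq (A * A)) (l : seq (A * A) -> K).

Definition tensor_eval phi u : K := \sum_(r <- u) phi r.1 r.2.

Definition tensor_mul u v := [seq (r.1 * s.1, r.2 * s.2) | r <- u, s <- v].

Definition tensor_test l := exists2 phi, bilin phi & l = tensor_eval phi.

Lemma tensor_eval_mul phi u v :
  tensor_eval phi (tensor_mul u v)
  = \sum_(r <- u) \sum_(s <- v) phi (r.1 * s.1) (r.2 * s.2).
Proof. exact: big_allpairs_dep. Qed.

Lemma tensor_testA l u v w : tensor_test l ->
  l (tensor_mul u (tensor_mul v w)) = l (tensor_mul (tensor_mul u v) w).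
Proof.
case=> phi _ ->; rewrite !tensor_eval_mul.
under eq_bigr => r _ do rewrite big_allpairs_dep.
rewrite big_allpairs_dep; apply: eq_bigr => r _; apply: eq_bigr => s _.
by apply: eq_bigr => t _; rewrite /= !mulrA.
Qed.

Lemma tensor_test_mul1 l u : tensor_test l -> l (tensor_mul u [:: (1, 1)]) = l u.
Proof.
case=> phi _ ->; rewrite tensor_eval_mul.
by apply: eq_bigr => r _; rewrite big_seq1 !mulr1.
Qed.

Lemma tensor_test_1mul l u : tensor_test l -> l (tensor_mul [:: (1, 1)] u) = l u.
Proof.
case=> phi _ ->; rewrite tensor_eval_mul big_seq1.
by apply: eq_bigr => r _; rewrite !mul1r.
Qed.

Lemma tensor_test_mull u l : tensor_test l -> tensor_test (fun v => l (tensor_mul u v)).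
Proof.
case=> phi hphi ->; exists (fun x y => \sum_(r <- u) phi (r.1 * x) (r.2 * y)).
  by split=> ?; apply: klin_sum_fun => r; linearity.
by apply: functional_extensionality => v; rewrite tensor_eval_mul exchange_big.
Qed.

Lemma tensor_test_mulr u l : tensor_test l -> tensor_test (fun v => l (tensor_mul v u)).
Proof.
case=> phi hphi ->; exists (fun x y => \sum_(s <- u) phi (x * s.1) (y * s.2)).
  by split=> ?; apply: klin_sum_fun => s; linearity.
by apply: functional_extensionality => v; rewrite tensor_eval_mul.
Qed.

End TensorSquare.

Section Antipode.
Variables (K : fieldType) (A : algType K) (H : HopfData A).
Hypothesis hH : is_hopf H.
Local Notation S := (ant H).
Local Notation e := (cou H).

Lemma antM l a b : klin l -> l (S (a * b)) = l (S b * S a).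
Proof.
have hS := ant_lin hH.
apply: (@alg_conv_inverse_unique K _ _ _ _ A (fun x => x.1 * x.2)
  (fun x => S (x.1 * x.2)) (fun x => S x.2 * S x.1) (pair_coassoc hH) (pair_counit hH)
  _ _ _ _ _ _ (a, b)) => [l' hl'|l' hl'|l' hl'|l' [x y] hl'|l' [x y] hl'].
- by split=> ? /=; linearity.
- by split=> ? /=; linearity.
- by split=> ? /=; linearity.
- rewrite sum_pair_cop /pair_cou /= -couM //.
  rewrite -(copM hH (phi := fun u v => l' (S u * v))); last by split=> ?; linearity.
  exact: klin_antipode_l.
- rewrite sum_pair_cop /pair_cou /=.
  transitivity (\sum_(p <- cop H x) e y * l' (p.1 * S p.2)).
    apply: eq_bigr => p _.
    under eq_bigr => q _ do rewrite -mulrA [q.1 * _]mulrA.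
    rewrite (klin_antipode_r hH (l := fun w => l' (p.1 * (w * S p.2)))) ?mul1r //.
    by linearity.
  by rewrite -mulr_sumr klin_antipode_r // mulrCA mulrA.
Qed.

Lemma cop_ant_twist phi a : bilin phi ->
  \sum_(p <- cop H a) \sum_(q <- cop H p.1) \sum_(r <- cop H p.2)
    phi (q.1 * S r.2) (q.2 * S r.1) = e a * phi 1 1.
Proof.
move=> hphi; have hS := ant_lin hH.
rewrite (@hopf_coassoc _ _ _ hH (fun x y z => \sum_(r <- cop H z)
  phi (x * S r.2) (y * S r.1))); first last.
- move=> x y; apply: (cop_klin hH (phi := fun u v => phi (x * S v) (y * S u))).
  by split=> ?; linearity.
- by move=> x z; apply: klin_sum_fun => r; linearity.
- by move=> y z; apply: klin_sum_fun => r; linearity.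
transitivity (\sum_(p <- cop H a) phi (p.1 * S p.2) 1); last first.
  by rewrite (klin_antipode_r hH (l := fun w => phi w 1)) //; linearity.
apply: eq_bigr => p _.
rewrite -(@hopf_coassoc _ _ _ hH (fun x y z => phi (p.1 * S z) (x * S y))); first last.
- by move=> x y; linearity.
- by move=> x z; linearity.
- by move=> y z; linearity.
transitivity (\sum_(q <- cop H p.2) e q.1 * phi (p.1 * S q.2) 1).
  by apply: eq_bigr => q _; rewrite klin_antipode_r //; linearity.
by apply: (cou_cop_l hH (g := fun z => phi (p.1 * S z) 1)); linearity.
Qed.

Lemma cop_ant phi a : bilin phi ->
  \sum_(r <- cop H (S a)) phi r.1 r.2 = \sum_(p <- cop H a) phi (S p.2) (S p.1).
Proof.
move=> hphi; have hS := ant_lin hH.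
transitivity (tensor_eval phi [seq (S p.2, S p.1) | p <- cop H a]); last first.
  by rewrite /tensor_eval big_map.
apply: (@conv_inverse_unique K A (seq (A * A)) (cop H) e (@klin K A)
  (hopf_coassoc hH) (hopf_counit hH) (@tensor_mul K A) [:: (1, 1)] (@tensor_test K A)
  (@tensor_testA K A) (@tensor_test_mul1 K A) (@tensor_test_1mul K A)
  (@tensor_test_mull K A) (@tensor_test_mulr K A)
  (cop H) (fun x => cop H (S x)) (fun x => [seq (S p.2, S p.1) | p <- cop H x])
  _ _ _ _ _ (tensor_eval phi) a (ex_intro2 _ _ phi hphi erefl)).
- by move=> l [psi hpsi ->]; exact: cop_klin.
- move=> l [psi hpsi ->].
  by apply: (@klin_comp _ _ _ (fun x => tensor_eval psi (cop H x)) S) => //; exact: cop_klin.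
- move=> l [psi hpsi ->].
  apply: (@klin_eq _ _ (fun x => \sum_(p <- cop H x) psi (S p.2) (S p.1))).
    by move=> x; rewrite /tensor_eval big_map.
  by apply: (cop_klin hH (phi := fun u v => psi (S v) (S u))); split=> ?; linearity.
- move=> l x [psi hpsi ->].
  under eq_bigr => p _ do rewrite tensor_eval_mul -(copM hH _ _ hpsi).
  rewrite /tensor_eval big_seq1 (klin_antipode_l hH (l := fun y =>
    \sum_(r <- cop H y) psi r.1 r.2)) ?cop1 //.
  exact: cop_klin.
- move=> l x [psi hpsi ->]; rewrite {2}/tensor_eval big_seq1 -(cop_ant_twist x hpsi).
  apply: eq_bigr => p _; rewrite tensor_eval_mul.
  by apply: eq_bigr => q _; rewrite big_map.
Qed.

End Antipode.

Section HopfMap.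
Variables (K : fieldType) (A B : algType K) (HA : HopfData A) (HB : HopfData B).
Hypotheses (hA : is_hopf HA) (hB : is_hopf HB).
Variable chi : A -> B.
Hypothesis hchi : hopf_map HA HB chi.

Lemma hopf_map_lin : lin chi.
Proof. by case: hchi. Qed.

Lemma hopf_map1 : chi 1 = 1.
Proof. by case: hchi => _ []. Qed.

Lemma hopf_mapM a b : chi (a * b) = chi a * chi b.
Proof. by case: hchi => _ [_ []]. Qed.

Lemma hopf_map_cou a : cou HB (chi a) = cou HA a.
Proof. by case: hchi => _ [_ [_ []]]. Qed.

Lemma hopf_map_cop phi a : bilin phi ->
  \sum_(p <- cop HB (chi a)) phi p.1 p.2 = \sum_(p <- cop HA a) phi (chi p.1) (chi p.2).
Proof. by case: hchi => _ [_ [_ [_ h]]] hphi; apply: h. Qed.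

Lemma hopf_map_ant l a : klin l -> l (ant HB (chi a)) = l (chi (ant HA a)).
Proof.
have hSA := ant_lin hA; have hSB := ant_lin hB; have hc := hopf_map_lin.
apply: (@alg_conv_inverse_unique K A _ _ _ B chi (fun x => ant HB (chi x))
  (fun x => chi (ant HA x)) (hopf_coassoc hA) (hopf_counit hA))
  => [l' hl'|l' hl'|l' hl'|l' x hl'|l' x hl']; try by linearity.
- rewrite -(hopf_map_cop (phi := fun u v => l' (ant HB u * v))); last first.
    by split=> ?; linearity.
  by rewrite klin_antipode_l // hopf_map_cou.
- under eq_bigr => p _ do rewrite -hopf_mapM.
  by rewrite (klin_antipode_r hA (l := fun y => l' (chi y))) ?hopf_map1 //; linearity.
Qed.

End HopfMap.

Section Forall.
Variable T : Type.
Implicit Types (P : T -> Prop) (s : seq T).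

Lemma Forall_cat P s1 s2 :
  List.Forall P s1 -> List.Forall P s2 -> List.Forall P (s1 ++ s2).
Proof.
elim: s1 => [//|x s1 IHs1] /List.Forall_cons_iff[Px Ps1] Ps2.
by constructor; last exact: IHs1.
Qed.

Lemma Forall_nthP P s d : List.Forall P s <-> forall i, (i < size s)%N -> P (nth d s i).
Proof.
elim: s => [|x s IHs] /=; first by split=> // _; constructor.
rewrite List.Forall_cons_iff IHs; split=> [[Px Ps] [|i] //= /Ps|Ps]//.
by split=> [|i /(Ps i.+1)]; [exact: (Ps 0%N)|].
Qed.

End Forall.

Lemma Forall_map (T U : Type) (F : T -> U) (P : U -> Prop) (s : seq T) :
  List.Forall (fun x => P (F x)) s -> List.Forall P (map F s).
Proof.
by elim: s => //= x s IHs /List.Forall_cons_iff[Px Ps]; constructor; last exact: IHs.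
Qed.

Lemma Forall_allpairs (T U V : Type) (F : T -> U -> V) (P : T -> Prop) (Q : U -> Prop)
    (R : V -> Prop) (s : seq T) (t : seq U) :
  (forall x y, P x -> Q y -> R (F x y)) ->
  List.Forall P s -> List.Forall Q t -> List.Forall R [seq F x y | x <- s, y <- t].
Proof.
move=> PQR; elim: s => //= x s IHs /List.Forall_cons_iff[Px Ps] Qt.
apply: Forall_cat (IHs Ps Qt); apply: Forall_map.
by apply: List.Forall_impl Qt => y; exact: PQR.
Qed.

Section Decomposition.
Variables (K : fieldType) (A : algType K) (H : HopfData A).
Hypothesis hH : is_hopf H.
Variable X : (A -> K) -> Prop.

Lemma cop_inP f : cop_in X f <-> exists s,
  List.Forall (fun p => X p.1 /\ X p.2) s /\
  forall a b, f (a * b) = \sum_(p <- s) p.1 a * p.2 b.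
Proof.
split=> -[s [Xs fs]]; exists s; split=> //.
  exact/(Forall_nthP _ _ (fun _ => 0, fun _ => 0)).
by move: Xs => /(Forall_nthP _ _ (fun _ => 0, fun _ => 0)).
Qed.

Hypothesis X_scale : forall k f, X f -> X (fun x => k * f x).
Hypothesis X_conv : forall f g, X f -> X g -> X (conv H f g).
Hypothesis X_ant : forall f, X f -> X (fun x => f (ant H x)).

Lemma cop_in_lincomb k f g :
  cop_in X f -> cop_in X g -> cop_in X (fun x => k * f x + g x).
Proof.
move=> /cop_inP[sf [Xf ef]] /cop_inP[sg [Xg eg]]; apply/cop_inP.
exists ([seq (fun x => k * p.1 x, p.2) | p <- sf] ++ sg); split.
  apply: Forall_cat Xg; apply: Forall_map.
  by apply: List.Forall_impl Xf => p [Xp1 Xp2]; split=> //; exact: X_scale.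
move=> a b; rewrite big_cat big_map ef eg mulr_sumr /=; congr (_ + _).
by apply: eq_bigr => p _; rewrite mulrA.
Qed.

Lemma cop_in_conv f g : klin f -> klin g ->
  cop_in X f -> cop_in X g -> cop_in X (conv H f g).
Proof.
move=> kf kg /cop_inP[sf [Xf ef]] /cop_inP[sg [Xg eg]]; apply/cop_inP.
exists [seq (conv H r.1 t.1, conv H r.2 t.2) | r <- sf, t <- sg]; split.
  apply: Forall_allpairs Xf Xg => r t [Xr1 Xr2] [Xt1 Xt2].
  by split; apply: X_conv.
move=> a b; rewrite big_allpairs_dep /conv (copM hH _ _ (bilin_mul kf kg)) /=.
transitivity (\sum_(p <- cop H a) \sum_(q <- cop H b) \sum_(r <- sf) \sum_(t <- sg)
    r.1 p.1 * t.1 p.2 * (r.2 q.1 * t.2 q.2)).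
  apply: eq_bigr => p _; apply: eq_bigr => q _.
  rewrite ef eg mulr_suml; apply: eq_bigr => r _.
  by rewrite mulr_sumr; apply: eq_bigr => t _; rewrite mulrACA.
transitivity (\sum_(r <- sf) \sum_(t <- sg) \sum_(p <- cop H a) \sum_(q <- cop H b)
    r.1 p.1 * t.1 p.2 * (r.2 q.1 * t.2 q.2)).
  under eq_bigr => p _ do rewrite exchange_big.
  rewrite exchange_big; apply: eq_bigr => r _.
  by under eq_bigr => p _ do rewrite exchange_big; rewrite exchange_big.
apply: eq_bigr => r _; apply: eq_bigr => t _; rewrite mulr_suml.
by apply: eq_bigr => p _; rewrite mulr_sumr.
Qed.

Lemma cop_in_ant f : klin f -> cop_in X f -> cop_in X (fun x => f (ant H x)).
Proof.
move=> kf /cop_inP[sf [Xf ef]]; apply/cop_inP.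
exists [seq (fun x => p.2 (ant H x), fun x => p.1 (ant H x)) | p <- sf]; split.
  apply: Forall_map; apply: List.Forall_impl Xf => p [Xp1 Xp2].
  by split; apply: X_ant.
by move=> a b; rewrite big_map (antM hH _ _ kf) ef; apply: eq_bigr => p _; rewrite mulrC.
Qed.

End Decomposition.

Section Generation.
Variables (K : fieldType) (A : algType K) (H : HopfData A) (br : A -> A -> K).
Hypotheses (hH : is_hopf H) (hbr : is_braiding H br).
Local Notation S := (ant H).

Lemma braiding_bilin : bilin br.
Proof. by case: hbr. Qed.

Lemma braiding_mulr a b c : br a (b * c) = \sum_(p <- cop H a) br p.1 b * br p.2 c.
Proof. by case: hbr => _ [_ [_ [h _]]]. Qed.

Lemma braiding_mull a b c : br (a * b) c = \sum_(p <- cop H c) br b p.1 * br a p.2.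
Proof. by case: hbr => _ [_ [_ [_ h]]]. Qed.

Inductive Ugen : (A -> K) -> Prop :=
| Ugen_lplus a : Ugen (lplus br a)
| Ugen_lminus a : Ugen (lminus H br a)
| Ugen_cou : Ugen (cou H)
| Ugen_lincomb k f g : Ugen f -> Ugen g -> Ugen (fun x => k * f x + g x)
| Ugen_conv f g : Ugen f -> Ugen g -> Ugen (conv H f g)
| Ugen_ant f : Ugen f -> Ugen (fun x => f (S x)).

Lemma Ugen_eq f g : Ugen f -> (forall x, f x = g x) -> Ugen g.
Proof. by move=> Uf /functional_extensionality <-. Qed.

Lemma Ugen_scale k f : Ugen f -> Ugen (fun x => k * f x).
Proof.
move=> Uf; apply (Ugen_eq (Ugen_lincomb k Uf (Ugen_lincomb (-1) Ugen_cou Ugen_cou))) => x.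
by rewrite mulN1r addNr addr0.
Qed.

Lemma Ugen_klin f : Ugen f -> klin f.
Proof.
have hS := ant_lin hH; have [hbrl hbrr] := braiding_bilin.
elim=> [a|a||k f' g' _ kf _ kg|f' g' _ kf _ kg|f' _ kf].
- exact: hbrr.
- by rewrite /lminus; linearity.
- exact: cou_klin.
- exact: klin_lincomb.
- exact: (cop_klin hH (bilin_mul kf kg)).
- by linearity.
Qed.

Lemma cop_in_lplus a : cop_in Ugen (lplus br a).
Proof.
apply/cop_inP; exists [seq (lplus br p.1, lplus br p.2) | p <- cop H a]; split.
  by apply: Forall_map; apply/List.Forall_forall => p _; split; exact: Ugen_lplus.
by move=> x y; rewrite big_map /lplus braiding_mulr.
Qed.

Lemma cop_in_lminus a : cop_in Ugen (lminus H br a).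
Proof.
apply/cop_inP; exists [seq (lminus H br p.1, lminus H br p.2) | p <- cop H a]; split.
  by apply: Forall_map; apply/List.Forall_forall => p _; split; exact: Ugen_lminus.
move=> x y; rewrite big_map /lminus braiding_mull.
rewrite (cop_ant hH (phi := fun u v => br y u * br x v)); last first.
  by have [? ?] := braiding_bilin; apply: bilin_mul.
by apply: eq_bigr => p _; rewrite mulrC.
Qed.

Lemma cop_in_cou : cop_in Ugen (cou H).
Proof.
apply/cop_inP; exists [:: (cou H, cou H)]; split; first by repeat constructor.
by move=> x y; rewrite big_seq1 couM.
Qed.

Lemma Ugen_cop f : Ugen f -> cop_in Ugen f.
Proof.
elim=> [a|a||k f' g' _ cf _ cg|f' g' Uf cf Ug cg|f' Uf cf].
- exact: cop_in_lplus.
- exact: cop_in_lminus.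
- exact: cop_in_cou.
- exact (cop_in_lincomb (@Ugen_scale) k cf cg).
- exact (cop_in_conv hH (@Ugen_conv) (Ugen_klin Uf) (Ugen_klin Ug) cf cg).
- exact (cop_in_ant hH (@Ugen_ant) (Ugen_klin Uf) cf).
Qed.

Lemma Ugen_hopf_subalg : hopf_subalg H Ugen.
Proof.
split; first exact: Ugen_klin.
split; first exact: Ugen_cou.
split; first by move=> k f g; exact: Ugen_lincomb.
split; first exact: Ugen_conv.
split; first exact: Ugen_ant.
exact: Ugen_cop.
Qed.

Lemma UalgE f : Ualg H br f <-> Ugen f.
Proof.
split=> [|Uf X [_ [Xcou [Xlin [Xconv [Xant _]]]]] Xplus Xminus].
  by apply; [exact: Ugen_hopf_subalg | exact: Ugen_lplus | exact: Ugen_lminus].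
by elim: Uf => *; auto.
Qed.

End Generation.

Section Transport.
Variables (K : fieldType) (A B : algType K) (HA : HopfData A) (HB : HopfData B).
Variables (brA : A -> A -> K) (brB : B -> B -> K) (chi : A -> B).
Hypotheses (hA : is_hopf HA) (hB : is_hopf HB) (hbrB : is_braiding HB brB).
Hypothesis hchi : hopf_map HA HB chi.
Hypothesis chi_onto : forall b, exists a, chi a = b.
Hypothesis chi_braided : forall a a', brA a a' = brB (chi a) (chi a').

Lemma conv_comap (u v : B -> K) a : klin u -> klin v ->
  conv HB u v (chi a) = conv HA (fun x => u (chi x)) (fun x => v (chi x)) a.
Proof. by move=> ku kv; rewrite /conv (hopf_map_cop hchi _ (bilin_mul ku kv)). Qed.

Lemma lminus_comap a x : lminus HB brB (chi a) (chi x) = lminus HA brA a x.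
Proof.
rewrite /lminus chi_braided (hopf_map_ant hA hB hchi) //.
by have [_ ?] := braiding_bilin hbrB.
Qed.

Lemma Ugen_comap u : Ugen HB brB u -> Ugen HA brA (fun a => u (chi a)).
Proof.
have UgenB_klin := Ugen_klin hB hbrB.
elim=> [b|b||k f g _ Uf _ Ug|f g Uf' Uf Ug' Ug|f Uf' Uf].
- have [a <-] := chi_onto b.
  by apply (Ugen_eq (Ugen_lplus _ _ a)) => x; rewrite /lplus chi_braided.
- have [a <-] := chi_onto b.
  by apply (Ugen_eq (Ugen_lminus _ _ a)) => x; rewrite lminus_comap.
- by apply (Ugen_eq (Ugen_cou HA brA)) => x; rewrite (hopf_map_cou hchi).
- exact: Ugen_lincomb.
- apply (Ugen_eq (Ugen_conv Uf Ug)) => x.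
  by rewrite conv_comap //; exact: UgenB_klin.
- apply (Ugen_eq (Ugen_ant Uf)) => x.
  by rewrite (hopf_map_ant hA hB hchi) //; exact: UgenB_klin.
Qed.

Lemma Ugen_comap_onto f : Ugen HA brA f ->
  exists u, Ugen HB brB u /\ forall a, u (chi a) = f a.
Proof.
have UgenB_klin := Ugen_klin hB hbrB.
elim=> [a|a||k f' g' _ [u [Uu eu]] _ [v [Uv ev]]|f' g' _ [u [Uu eu]] _ [v [Uv ev]]|
        f' _ [u [Uu eu]]].
- by exists (lplus brB (chi a)); split=> [|x]; [exact: Ugen_lplus | rewrite /lplus chi_braided].
- by exists (lminus HB brB (chi a)); split=> [|x]; [exact: Ugen_lminus | exact: lminus_comap].
- by exists (cou HB); split=> [|x]; [exact: Ugen_cou | exact: hopf_map_cou].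
- exists (fun b => k * u b + v b); split=> [|x]; first exact: Ugen_lincomb.
  by rewrite eu ev.
- exists (conv HB u v); split=> [|x]; first exact: Ugen_conv.
  rewrite conv_comap; try exact: UgenB_klin.
  by apply: eq_bigr => p _; rewrite eu ev.
- exists (fun b => u (ant HB b)); split=> [|x]; first exact: Ugen_ant.
  by rewrite (hopf_map_ant hA hB hchi x (UgenB_klin _ Uu)) eu.
Qed.

End Transport.

Theorem proposition3 (K : fieldType) (A B : algType K)
  (HA : HopfData A) (HB : HopfData B)
  (brA : A -> A -> K) (brB : B -> B -> K) (chi : A -> B) :
  is_hopf HA -> is_hopf HB ->
  is_braiding HA brA -> is_braiding HB brB ->
  hopf_map HA HB chi ->
  (forall b : B, exists a : A, chi a = b) ->
  (forall a a' : A, brA a a' = brB (chi a) (chi a')) ->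
  (forall u, Ualg HB brB u -> Ualg HA brA (fun a => u (chi a))) /\
  (forall u v, Ualg HB brB u -> Ualg HB brB v ->
     (forall a, u (chi a) = v (chi a)) -> forall b, u b = v b) /\
  (forall f, Ualg HA brA f ->
     exists u, Ualg HB brB u /\ forall a, u (chi a) = f a) /\
  (forall u v, Ualg HB brB u -> Ualg HB brB v -> forall a,
     conv HB u v (chi a) = conv HA (fun x => u (chi x)) (fun x => v (chi x)) a) /\
  (forall a, cou HB (chi a) = cou HA a) /\
  (forall u, Ualg HB brB u -> u (chi 1) = u 1) /\
  (forall u, Ualg HB brB u -> forall s : seq ((B -> K) * (B -> K)),
     (forall b b', u (b * b') = \sum_(p <- s) p.1 b * p.2 b') ->
     forall a a', u (chi (a * a')) = \sum_(p <- s) p.1 (chi a) * p.2 (chi a')) /\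
  (forall u, Ualg HB brB u -> forall a, u (ant HB (chi a)) = u (chi (ant HA a))).
Proof.
move=> hA hB hbrA hbrB hchi chi_onto chi_braided.
have klinB u : Ualg HB brB u -> klin u by move/(UalgE hB hbrB)/(Ugen_klin hB hbrB).
split.
  move=> u /(UalgE hB hbrB) Uu; apply/(UalgE hA hbrA).
  exact: (Ugen_comap hA hB hbrB hchi chi_onto chi_braided Uu).
split; first by move=> u v _ _ euv b; have [a <-] := chi_onto b.
split.
  move=> f /(UalgE hA hbrA)/(Ugen_comap_onto hA hB hbrB hchi chi_braided) [u [Uu eu]].
  by exists u; split=> //; apply/(UalgE hB hbrB).
split; first by move=> u v /klinB ku /klinB kv a; exact: (conv_comap hchi a ku kv).
split; first exact: (hopf_map_cou hchi).
split; first by move=> u _; rewrite (hopf_map1 hchi).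
split; first by move=> u _ s us a a'; rewrite (hopf_mapM hchi) us.
by move=> u /klinB ku a; exact: (hopf_map_ant hA hB hchi a ku).
Qed.
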